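(* Let $G$ be a graph with no induced $P_7$, $C_4$, $C_6$ or $C_7$, let $H=(B_1,\dots,B_5)$ be a maximal nice blowup of $C_5$ in $G$, and for each $j$ let $q_j$ be a fixed vertex of $B_j$ complete to $B_{j-1}\cup B_{j+1}$. Let $i\in\{1,\dots,5\}$, let $x\in A_3(i)$, and suppose $B_i\setminus N(x)$ is anticomplete to $N_{B_{i+1}}(x)$. Then: (1) $q_i\in N_{B_i}(x)$ and $q_{i+1}\in B_{i+1}\setminus N(x)$; (2) $N_{B_i}(x)$ is complete to $N_{B_j}(x)$ for $j\in\{i-1,i+1\}$; (3) for any $a\in B_i\setminus N(x)$ and $b\in N_{B_i}(x)$, $N_{B_{i-1}\cup B_{i+1}}(a)\subsetneq N_{B_{i-1}\cup B_{i+1}}(b)$; (4) for any $a\in B_{i-1}\setminus N(x)$ and $b\in N_{B_{i-1}}(x)$, $N_{B_{i-2}\cup B_i}(a)\subseteq N_{B_{i-2}\cup B_i}(b)$; consequently there is a vertex in $N_{B_{i-1}}(x)$ complete to $B_{i-2}\cup B_i$.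
   Context: Indices modulo $5$. A nice blowup of $C_5$ is a tuple $(B_1,\dots,B_5)$ of pairwise disjoint cliques such that every vertex of $B_j$ has a neighbor in $B_{j-1}$ and in $B_{j+1}$, $B_j$ is anticomplete to $B_{j+2}$, and there are no $a\in B_j$, distinct $b,c\in B_{j+1}$, $d\in B_{j+2}$ with $G[\{a,b,c,d\}]\cong P_4$; $V(H)=\bigcup B_j$; maximal means no nice blowup has vertex set strictly containing $V(H)$. (Such vertices $q_j$ exist.) For $v\notin V(H)$, $\operatorname{supp}(v)$ is the set of $j$ such that $v$ has a neighbor in $B_j$; $A_3(i)=\{v\notin V(H):\operatorname{supp}(v)=\{i-1,i,i+1\}\}$. $N(x)$ is the neighborhood of $x$ and $N_S(x)=N(x)\cap S$. *)

(* finite simple graphs as symmetric irreflexive relations. *)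
From mathcomp Require Import all_boot.
Set Implicit Arguments. Unset Strict Implicit. Unset Printing Implicit Defensive.

Section Graphs.
Variable T : finType.
Variable e : rel T.

Definition nbhd (x : T) : {set T} := [set y | e x y].
Definition nbhd_in (S : {set T}) (x : T) : {set T} := S :&: nbhd x.

Definition is_clique (S : {set T}) : Prop :=
  forall x y, x \in S -> y \in S -> x != y -> e x y.
Definition complete (A B : {set T}) : Prop :=
  forall a b, a \in A -> b \in B -> e a b.
Definition anticomplete (A B : {set T}) : Prop :=
  forall a b, a \in A -> b \in B -> ~~ e a b.

Definition induced_iso (S : {set T}) (n : nat) (h : rel 'I_n) : Prop :=
  exists f : 'I_n -> T, [/\ injective f, [set f i | i : 'I_n] = S &
     forall i j, e (f i) (f j) = h i j].

Definition has_induced (n : nat) (h : rel 'I_n) : Prop :=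
  exists f : 'I_n -> T, injective f /\ forall i j, e (f i) (f j) = h i j.
End Graphs.

Definition path_rel (n : nat) : rel 'I_n :=
  fun i j => (i.+1 == j :> nat) || (j.+1 == i :> nat).
Definition cycle_rel (n : nat) : rel 'I_n :=
  fun i j => (i != j) && ((ordS i == j) || (ordS j == i)).

Arguments path_rel : clear implicits.
Arguments cycle_rel : clear implicits.

Definition isucc (j : 'I_5) : 'I_5 := ordS j.
Definition ipred (j : 'I_5) : 'I_5 := ord_pred j.

Section Blowup.
Variable T : finType.
Variable e : rel T.

Definition VH (B : 'I_5 -> {set T}) : {set T} := \bigcup_(j < 5) B j.

Definition nice_blowup (B : 'I_5 -> {set T}) : Prop :=
  [/\ (forall j k, j != k -> [disjoint B j & B k]),
      (forall j, is_clique e (B j)),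
      (forall j v, v \in B j ->
         (exists2 u, u \in B (ipred j) & e v u) /\
         (exists2 u, u \in B (isucc j) & e v u)),
      (forall j, anticomplete e (B j) (B (isucc (isucc j)))) &
      (forall j a b c d, a \in B j -> b \in B (isucc j) -> c \in B (isucc j) ->
         b != c -> d \in B (isucc (isucc j)) ->
         ~ induced_iso e [set a; b; c; d] (path_rel 4))].

Definition maximal_nice_blowup (B : 'I_5 -> {set T}) : Prop :=
  nice_blowup B /\
  forall B' : 'I_5 -> {set T}, nice_blowup B' -> ~ (VH B \proper VH B').

Definition supp (B : 'I_5 -> {set T}) (v : T) : {set 'I_5} :=
  [set j | [exists u in B j, e v u]].

Definition A3 (B : 'I_5 -> {set T}) (i : 'I_5) : {set T} :=
  [set v | (v \notin VH B) && (supp B v == [set ipred i; i; isucc i])].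
End Blowup.

From mathcomp Require Import all_boot.
Set Implicit Arguments. Unset Strict Implicit. Unset Printing Implicit Defensive.

(* If x were complete to B_i it could be added to B_i: every induced P4 that
   this creates would close an induced C6 through x or q_(i+2), q_(i-2).  So
   maximality gives a non-neighbour of x in B_i, and with the anticompleteness
   hypothesis this places q_i and q_(i+1).  Each remaining claim is proved by
   contradiction: a missing edge closes an induced C4, C6 or C7 made of x, the
   vertices at hand, a neighbour of x in B_(i-1) or B_(i+1), and q_(i+2),
   q_(i-2). *)

Ltac ord_cases i := case: i => [[|[|[|[|[|[|[|?]]]]]]] ?] //.

Definition twin_free n (h : rel 'I_n) : Prop :=
  forall i j, ~~ h i j -> h^~ i =1 h^~ j -> i = j.

Lemma twin_free_cycle6 : twin_free (cycle_rel 6).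
Proof.
move=> i j _ H; move: (H (ordS i)) (H (ord_pred i)); clear H.
by ord_cases i; ord_cases j => *; apply/val_inj.
Qed.

Lemma twin_free_cycle7 : twin_free (cycle_rel 7).
Proof.
move=> i j _ H; move: (H (ordS i)) (H (ord_pred i)); clear H.
by ord_cases i; ord_cases j => *; apply/val_inj.
Qed.

Lemma path4_shape (ka kb kc kd : 'I_4) :
  (forall k, k \in [:: ka; kb; kc; kd]) -> path_rel 4 kb kc -> ~~ path_rel 4 ka kd ->
  [&& path_rel 4 ka kb, path_rel 4 kc kd, ~~ path_rel 4 ka kc & ~~ path_rel 4 kb kd] ||
  [&& path_rel 4 ka kc, path_rel 4 kb kd, ~~ path_rel 4 ka kb & ~~ path_rel 4 kc kd].
Proof.
move=> cover.
move: (cover ord0) (cover (@Ordinal 4 1 isT)) (cover (@Ordinal 4 2 isT)) (cover ord_max).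
by clear cover; ord_cases ka; ord_cases kb; ord_cases kc; ord_cases kd.
Qed.

Section InducedSubgraphs.
Variables (T : finType) (e : rel T).
Hypotheses (e_sym : symmetric e) (e_irr : irreflexive e).

Lemma edge_neq u v : e u v -> u != v.
Proof. by apply: contraTneq => ->; rewrite e_irr. Qed.

Lemma has_induced_twin_free n (h : rel 'I_n) (f : 'I_n -> T) :
  twin_free h -> (forall i j, e (f i) (f j) = h i j) -> has_induced e h.
Proof.
move=> tf ef; exists f; split=> // i j fij; apply: tf => [|k].
  by rewrite -ef fij e_irr.
by rewrite -!ef fij.
Qed.

Lemma has_induced_uniq n (h : rel 'I_n) (s : seq T) (v0 : T) :
  size s = n -> uniq s ->
  (forall i j : 'I_n, e (nth v0 s i) (nth v0 s j) = h i j) -> has_induced e h.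
Proof.
move=> sz us es; exists (fun i : 'I_n => nth v0 s i); split=> // i j /eqP.
by rewrite nth_uniq ?sz // => /eqP/val_inj.
Qed.

Ltac edge_tac := rewrite /cycle_rel /=; first
  [ done | by rewrite e_sym | by rewrite e_irr
  | apply/negbTE; first [done | by rewrite e_sym] ].

(* Opposite vertices of C4 are twins, so their distinctness is assumed. *)
Lemma no_induced_C4 v0 v1 v2 v3 : ~ has_induced e (cycle_rel 4) ->
  e v0 v1 -> e v1 v2 -> e v2 v3 -> e v3 v0 -> ~~ e v0 v2 -> ~~ e v1 v3 ->
  v0 != v2 -> v1 != v3 -> False.
Proof.
move=> noC4 e01 e12 e23 e30 n02 n13 d02 d13; apply: noC4.
apply: (@has_induced_uniq _ _ [:: v0; v1; v2; v3] v0) => // [|i j].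
  have d03 : v0 != v3 by rewrite eq_sym edge_neq.
  by rewrite /= !inE !negb_or d02 d03 d13 (edge_neq e01) (edge_neq e12) (edge_neq e23).
by ord_cases i; ord_cases j; edge_tac.
Qed.

Lemma no_induced_C6 v0 v1 v2 v3 v4 v5 : ~ has_induced e (cycle_rel 6) ->
  e v0 v1 -> e v1 v2 -> e v2 v3 -> e v3 v4 -> e v4 v5 -> e v5 v0 ->
  ~~ e v0 v2 -> ~~ e v0 v3 -> ~~ e v0 v4 -> ~~ e v1 v3 -> ~~ e v1 v4 -> ~~ e v1 v5 ->
  ~~ e v2 v4 -> ~~ e v2 v5 -> ~~ e v3 v5 -> False.
Proof.
move=> noC6 *; apply: noC6.
apply: (@has_induced_twin_free _ _ (fun k => nth v0 [:: v0; v1; v2; v3; v4; v5] k)).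
  exact: twin_free_cycle6.
by move=> i j; ord_cases i; ord_cases j; edge_tac.
Qed.

Lemma no_induced_C7 v0 v1 v2 v3 v4 v5 v6 : ~ has_induced e (cycle_rel 7) ->
  e v0 v1 -> e v1 v2 -> e v2 v3 -> e v3 v4 -> e v4 v5 -> e v5 v6 -> e v6 v0 ->
  ~~ e v0 v2 -> ~~ e v0 v3 -> ~~ e v0 v4 -> ~~ e v0 v5 ->
  ~~ e v1 v3 -> ~~ e v1 v4 -> ~~ e v1 v5 -> ~~ e v1 v6 ->
  ~~ e v2 v4 -> ~~ e v2 v5 -> ~~ e v2 v6 -> ~~ e v3 v5 -> ~~ e v3 v6 -> ~~ e v4 v6 -> False.
Proof.
move=> noC7 *; apply: noC7.
apply: (@has_induced_twin_free _ _ (fun k => nth v0 [:: v0; v1; v2; v3; v4; v5; v6] k)).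
  exact: twin_free_cycle7.
by move=> i j; ord_cases i; ord_cases j; edge_tac.
Qed.

Lemma induced_P4_shape a b c d :
  induced_iso e [set a; b; c; d] (path_rel 4) -> e b c -> ~~ e a d ->
  [&& e a b, e c d, ~~ e a c & ~~ e b d] || [&& e a c, e b d, ~~ e a b & ~~ e c d].
Proof.
case=> f [finj img ef].
have preim z : z \in [set a; b; c; d] -> {k | f k = z}.
  by rewrite -img => /imsetP/sig2_eqW [k _ ->]; exists k.
have [ka ?] : {k | f k = a} by apply: preim; rewrite !inE eqxx.
have [kb ?] : {k | f k = b} by apply: preim; rewrite !inE eqxx !orbT.
have [kc ?] : {k | f k = c} by apply: preim; rewrite !inE eqxx !orbT.
have [kd ?] : {k | f k = d} by apply: preim; rewrite !inE eqxx !orbT.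
subst a b c d; rewrite !ef; apply: path4_shape => k.
have : f k \in [set f ka; f kb; f kc; f kd] by rewrite -img imset_f.
by rewrite !inE !(inj_eq finj) -!orbA.
Qed.

End InducedSubgraphs.

Arguments no_induced_C4 {T e} e_sym e_irr v0 v1 v2 v3.
Arguments no_induced_C6 {T e} e_sym e_irr v0 v1 v2 v3 v4 v5.
Arguments no_induced_C7 {T e} e_sym e_irr v0 v1 v2 v3 v4 v5 v6.

Definition far_idx (j k : 'I_5) : bool :=
  (k == isucc (isucc j)) || (j == isucc (isucc k)).
Definition near_idx (j k : 'I_5) : bool := (k == ipred j) || (k == isucc j).

Lemma ipred_succ (j : 'I_5) : ipred (isucc j) = j.
Proof. by apply/val_inj; ord_cases j. Qed.

Lemma isucc_pred (j : 'I_5) : isucc (ipred j) = j.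
Proof. by apply/val_inj; ord_cases j. Qed.

Definition add_vertex (T : finType) (B : 'I_5 -> {set T}) (i : 'I_5) (x : T) :
  'I_5 -> {set T} := fun k => if k == i then x |: B k else B k.

Section NiceBlowup.
Variables (T : finType) (e : rel T).
Hypothesis e_sym : symmetric e.
Variable B : 'I_5 -> {set T}.

Lemma VH_block j u : u \in B j -> u \in VH B.
Proof. by move=> hu; apply/bigcupP; exists j. Qed.

Lemma in_add_vertex i x k u :
  (u \in add_vertex B i x k) = (u \in B k) || (k == i) && (u == x).
Proof. by rewrite /add_vertex; case: (k == i); rewrite ?inE ?orbF // orbC. Qed.

Lemma VH_add_vertex_proper i x : x \notin VH B -> VH B \proper VH (add_vertex B i x).
Proof.
move=> xV; rewrite properE; apply/andP; split.
  apply/subsetP => u /bigcupP [k _ hu]; apply/bigcupP; exists k => //.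
  by rewrite in_add_vertex hu.
apply/subsetPn; exists x => //; apply/bigcupP; exists i => //.
by rewrite in_add_vertex !eqxx orbT.
Qed.

Hypothesis B_nice : nice_blowup e B.

Lemma blowup_neq j k u v : u \in B j -> v \in B k -> j != k -> u != v.
Proof.
case: B_nice => Bdis _ _ _ _ hu hv jk.
by apply: contraTneq hv => <-; rewrite (disjointFr (Bdis _ _ jk) hu).
Qed.

Lemma blowup_adj j u v : u \in B j -> v \in B j -> u != v -> e u v.
Proof. by case: B_nice => _ Bcl _ _ _; apply: Bcl. Qed.

Lemma blowup_nbr_next j v : v \in B j -> exists2 u, u \in B (isucc j) & e v u.
Proof. by case: B_nice => _ _ Bnb _ _ /Bnb []. Qed.

Lemma blowup_nonadj j k u v : u \in B j -> v \in B k -> far_idx j k -> ~~ e u v.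
Proof.
case: B_nice => _ _ _ Bac _ hu hv /orP [/eqP Ek | /eqP Ej].
  by rewrite Ek in hv; apply: (Bac _ _ _ hu hv).
by rewrite Ej in hu; rewrite e_sym; apply: (Bac _ _ _ hv hu).
Qed.

Lemma add_vertex_disjoint i x j k :
  x \notin VH B -> j != k -> [disjoint add_vertex B i x j & add_vertex B i x k].
Proof.
move=> xV jk; apply/pred0P => u /=; rewrite !in_add_vertex; apply/negbTE/andP => -[].
case/orP=> [uj | /andP [/eqP ji /eqP ux]] /orP [uk | /andP [/eqP ki /eqP ux']].
- by move: (blowup_neq uj uk jk); rewrite eqxx.
- by move: xV; rewrite -ux' (VH_block uj).
- by move: xV; rewrite -ux (VH_block uk).
- by move: jk; rewrite ji ki eqxx.
Qed.

Variable q : 'I_5 -> T.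
Hypothesis qB : forall j, q j \in B j.
Hypothesis qC : forall j, complete e [set q j] (B (ipred j) :|: B (isucc j)).

Lemma q_adj j k u : u \in B k -> near_idx j k -> e (q j) u.
Proof.
move=> hu /orP [] /eqP Ek; apply: (qC (set11 _)); by rewrite inE -Ek hu ?orbT.
Qed.

Section A3Vertex.
Hypothesis e_irr : irreflexive e.
Hypothesis noC4 : ~ has_induced e (cycle_rel 4).
Hypothesis noC6 : ~ has_induced e (cycle_rel 6).
Hypothesis noC7 : ~ has_induced e (cycle_rel 7).
Variables (i : 'I_5) (x : T).
Hypothesis x_A3 : x \in A3 e B i.

Local Notation im1 := (ipred i).
Local Notation im2 := (ipred (ipred i)).
Local Notation ip1 := (isucc i).
Local Notation ip2 := (isucc (isucc i)).

Lemma A3_notin_VH : x \notin VH B.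
Proof. by move: x_A3; rewrite inE => /andP []. Qed.

Lemma A3_supp : supp e B x = [set im1; i; ip1].
Proof. by move: x_A3; rewrite inE => /andP [_ /eqP]. Qed.

Lemma A3_nbr k : k \in [set im1; i; ip1] -> exists2 u, u \in B k & e x u.
Proof. by rewrite -A3_supp inE => /existsP [u /andP [hu xu]]; exists u. Qed.

Lemma A3_nonadj k u : u \in B k -> (k == ip2) || (k == im2) -> ~~ e x u.
Proof.
move=> hu hk; apply: contraTN hk => xu.
have : k \in supp e B x by rewrite inE; apply/existsP; exists u; rewrite hu.
rewrite A3_supp !inE.
by case: (i) => [[|[|[|[|[|?]]]]] ?]; case: k {hu} => [[|[|[|[|[|?]]]]] ?].
Qed.

Lemma A3_nbr_prev : exists2 u, u \in B im1 & e x u.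
Proof. by apply: A3_nbr; rewrite !inE eqxx. Qed.

Lemma A3_nbr_next : exists2 u, u \in B ip1 & e x u.
Proof. by apply: A3_nbr; rewrite !inE eqxx !orbT. Qed.

Lemma A3_neq k u : u \in B k -> x != u.
Proof. by move=> hu; apply: contraNneq A3_notin_VH => ->; exact: (VH_block hu). Qed.

Ltac by_index := by case: (i) => [[|[|[|[|[|?]]]]] ?] //; exact: isT.

Ltac block_of u := lazymatch u with
  | q ?j => constr:(qB j)
  | _ => match goal with
         | H : is_true (u \in ?S) |- _ => lazymatch S with context [B _] => constr:(H) end
         end
  end.

(* Closes adjacency, non-adjacency and distinctness goals between x and
   vertices of known blocks that the blowup structure and supp(x) force. *)
Ltac adj := lazymatch goal with
  | |- is_true (~~ e ?u ?v) => first
      [ done | by rewrite e_sym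
      | let hu := block_of u in let hv := block_of v in
        apply: (blowup_nonadj hu hv); by_index
      | lazymatch u with x =>
          let hv := block_of v in apply: (A3_nonadj hv); by_index end
      | lazymatch v with x =>
          let hu := block_of u in rewrite e_sym; apply: (A3_nonadj hu); by_index end ]
  | |- is_true (e ?u ?v) => first
      [ done | by rewrite e_sym
      | lazymatch u with q _ =>
          let hv := block_of v in apply: (q_adj hv); by_index end
      | lazymatch v with q _ =>
          let hu := block_of u in rewrite e_sym; apply: (q_adj hu); by_index end ]
  | |- is_true (?u != ?v) => first
      [ done
      | let hu := block_of u in let hv := block_of v in
        apply: (blowup_neq hu hv); by_index
      | lazymatch u with x => let hv := block_of v in exact: (A3_neq hv) end
      | lazymatch v with x => let hu := block_of u in rewrite eq_sym; exact: (A3_neq hu) end ]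
  end.

Local Notation B' := (add_vertex B i x).

Lemma add_vertex_at : B' i = x |: B i.
Proof. by rewrite /add_vertex eqxx. Qed.

Lemma add_vertex_other k : k != i -> B' k = B k.
Proof. by rewrite /add_vertex => /negbTE ->. Qed.

Lemma add_vertex_clique (x_Bi : forall u, u \in B i -> e x u) j : is_clique e (B' j).
Proof.
move=> u v; rewrite !in_add_vertex.
case/orP=> [hu | /andP [/eqP ji /eqP ->]] /orP [hv | /andP [/eqP ji' /eqP ->]] uv.
- exact: (blowup_adj hu hv uv).
- by rewrite e_sym x_Bi // -ji'.
- by rewrite x_Bi // -ji.
- by rewrite eqxx in uv.
Qed.

Lemma add_vertex_anticomplete j : anticomplete e (B' j) (B' (isucc (isucc j))).
Proof.
move=> u v; rewrite !in_add_vertex.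
case/orP=> [hu | /andP [/eqP ji /eqP ->]] /orP [hv | /andP [/eqP ji' /eqP ->]].
- by apply: (blowup_nonadj hu hv); rewrite /far_idx eqxx.
- by rewrite e_sym; apply: (A3_nonadj hu); rewrite -ji' !ipred_succ eqxx orbT.
- by apply: (A3_nonadj hv); rewrite ji eqxx.
- by rewrite e_irr.
Qed.

Lemma add_vertex_nbrs j v : v \in B' j ->
  (exists2 u, u \in B' (ipred j) & e v u) /\ (exists2 u, u \in B' (isucc j) & e v u).
Proof.
rewrite in_add_vertex => /orP [hv | /andP [/eqP -> /eqP ->]].
  case: B_nice => _ _ Bnb _ _; have [[u hu vu] [w hw vw]] := Bnb j v hv.
  by split; [exists u | exists w]; rewrite // in_add_vertex ?hu ?hw.
have [u hu xu] := A3_nbr_prev; have [w hw xw] := A3_nbr_next.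
by split; [exists u | exists w]; rewrite // in_add_vertex ?hu ?hw.
Qed.

Lemma no_P4_x_first b c d : b \in B ip1 -> c \in B ip1 -> d \in B ip2 ->
  e x b -> e b c -> e c d -> ~~ e x c -> ~~ e b d -> False.
Proof.
move=> hb hc hd *; have [y hy xy] := A3_nbr_prev.
by apply: (no_induced_C6 e_sym e_irr x b c d (q im2) y noC6); adj.
Qed.

Lemma no_P4_x_middle a u v d : a \in B im1 -> d \in B ip1 ->
  u \in x |: B i -> v \in x |: B i ->
  e a u -> e u v -> e v d -> ~~ e a v -> ~~ e u d -> False.
Proof.
have far_i w : w \in x |: B i -> ~~ e w (q ip2) && ~~ e w (q im2).
  by rewrite !inE => /orP [/eqP -> | hw]; apply/andP; split; adj.
move=> ha hd /far_i /andP [? ?] /far_i /andP [? ?] *.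
by apply: (no_induced_C6 e_sym e_irr a u v d (q ip2) (q im2) noC6); adj.
Qed.

Lemma no_P4_x_last a b c : a \in B im2 -> b \in B im1 -> c \in B im1 ->
  e a b -> e b c -> e c x -> ~~ e a c -> ~~ e b x -> False.
Proof.
move=> ha hb hc *; have [y hy xy] := A3_nbr_next.
by apply: (no_induced_C6 e_sym e_irr a b c x y (q ip2) noC6); adj.
Qed.

Lemma add_vertex_no_P4_path j a b c d :
  a \in B' j -> b \in B' (isucc j) -> c \in B' (isucc j) -> b != c ->
  d \in B' (isucc (isucc j)) -> induced_iso e [set a; b; c; d] (path_rel 4) ->
  e a b -> e b c -> e c d -> ~~ e a c -> ~~ e b d -> False.
Proof.
move=> ha hb hc bc hd iso ab ebc cd ac bd.
have [sj | sj] := eqVneq (isucc j) i.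
  rewrite sj add_vertex_at in hb hc.
  have ej : j = im1 by rewrite -sj ipred_succ.
  rewrite ej add_vertex_other in ha; last by_index.
  rewrite ej isucc_pred add_vertex_other in hd; last by_index.
  exact: (no_P4_x_middle ha hd hb hc ab ebc cd ac bd).
rewrite add_vertex_other // in hb hc.
move: ha hd; rewrite !in_add_vertex.
case/orP=> [ha | /andP [/eqP ji /eqP ax]] /orP [hd | /andP [/eqP ji' /eqP dx]].
- by case: B_nice => _ _ _ _ Bp4; apply: (Bp4 j a b c d ha hb hc bc hd iso).
- have ej : j = im2 by rewrite -ji' !ipred_succ.
  rewrite ej isucc_pred in hb hc; rewrite ej in ha; rewrite dx in cd bd.
  exact: (no_P4_x_last ha hb hc ab ebc cd ac bd).
- rewrite ji in hb hc hd; rewrite ax in ab ac.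
  exact: (no_P4_x_first hb hc hd ab ebc cd ac bd).
- by rewrite dx e_sym -ax ab in bd.
Qed.

Lemma add_vertex_no_P4 (x_Bi : forall u, u \in B i -> e x u) j a b c d :
  a \in B' j -> b \in B' (isucc j) -> c \in B' (isucc j) -> b != c ->
  d \in B' (isucc (isucc j)) -> ~ induced_iso e [set a; b; c; d] (path_rel 4).
Proof.
move=> ha hb hc bc hd iso; have ebc := add_vertex_clique x_Bi hb hc bc.
have swap : [set a; c; b; d] = [set a; b; c; d].
  by apply/setP => z; rewrite !inE; case: (z == b); case: (z == c); rewrite ?orbT.
have shape := induced_P4_shape iso ebc (add_vertex_anticomplete ha hd).
case/orP: shape => /and4P [h1 h2 h3 h4].
  exact: (add_vertex_no_P4_path ha hb hc bc hd iso h1 ebc h2 h3 h4).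
rewrite -swap e_sym eq_sym in iso ebc bc.
exact: (add_vertex_no_P4_path ha hc hb bc hd iso h1 ebc h2 h3 h4).
Qed.

Lemma nice_blowup_add_vertex (x_Bi : forall u, u \in B i -> e x u) : nice_blowup e B'.
Proof.
split.
- by move=> j k; apply: add_vertex_disjoint A3_notin_VH.
- exact: add_vertex_clique.
- exact: add_vertex_nbrs.
- exact: add_vertex_anticomplete.
- exact: add_vertex_no_P4.
Qed.

Hypothesis B_max : forall B', nice_blowup e B' -> ~ VH B \proper VH B'.

Lemma A3_nonnbr : exists2 a, a \in B i & ~~ e x a.
Proof.
have [/forall_inP x_Bi | /forall_inPn //] := boolP [forall u in B i, e x u].
by case: (B_max (nice_blowup_add_vertex x_Bi)); apply: VH_add_vertex_proper A3_notin_VH.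
Qed.

Hypothesis x_anti : anticomplete e (B i :\: nbhd e x) (nbhd_in e (B ip1) x).

Lemma A3_anti a c : a \in B i -> ~~ e x a -> c \in B ip1 -> e x c -> ~~ e a c.
Proof. by move=> ha xa hc xc; apply: x_anti; rewrite !inE ?ha ?hc ?xa ?xc. Qed.

Lemma A3_nonadj_q_next : ~~ e x (q ip1).
Proof.
have [a ha xa] := A3_nonnbr.
apply/negP => xq; have := A3_anti ha xa (qB ip1) xq.
by rewrite e_sym (q_adj ha) //; by_index.
Qed.

Lemma A3_complete_next b c : b \in B i -> e x b -> c \in B ip1 -> e x c -> e b c.
Proof.
move=> hb xb hc xc; apply/negPn/negP => nbc.
have xq := A3_nonadj_q_next.
have cq : c != q ip1 by apply: contraTneq xc => ->.
have ecq := blowup_adj hc (qB ip1) cq.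
by apply: (no_induced_C4 e_sym e_irr b x c (q ip1) noC4); adj.
Qed.

Lemma A3_complete_prev b y : b \in B i -> e x b -> y \in B im1 -> e x y -> e b y.
Proof.
move=> hb xb hy xy; apply/negPn/negP => nby.
have [a ha xa] := A3_nonnbr.
have ab : e a b by apply: (blowup_adj ha hb); apply: contraTneq xb => <-.
have [ay | nay] := boolP (e a y).
  by apply: (no_induced_C4 e_sym e_irr a y x b noC4); adj.
have [a1 ha1 aa1] := blowup_nbr_next ha.
have xa1 : ~~ e x a1 by apply: contraL aa1; apply: A3_anti.
have [ba1 | nba1] := boolP (e b a1).
  by apply: (no_induced_C6 e_sym e_irr b x y (q im2) (q ip2) a1 noC6); adj.
by apply: (no_induced_C7 e_sym e_irr a b x y (q im2) (q ip2) a1 noC7); adj.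
Qed.

Lemma A3_q_nbhd : q i \in nbhd_in e (B i) x /\ q ip1 \in B ip1 :\: nbhd e x.
Proof.
rewrite !inE !qB A3_nonadj_q_next; split=> //.
have [c hc xc] := A3_nbr_next.
by apply: contraT => xq; have := A3_anti (qB i) xq hc xc; rewrite (q_adj hc) //; by_index.
Qed.

Lemma A3_nbhd_complete :
  complete e (nbhd_in e (B i) x) (nbhd_in e (B im1) x) /\
  complete e (nbhd_in e (B i) x) (nbhd_in e (B ip1) x).
Proof.
split=> b y; rewrite !inE => /andP [hb xb] /andP [hy xy].
  exact: A3_complete_prev.
exact: A3_complete_next.
Qed.

Lemma A3_nbhd_mono_i_prev a b z : a \in B i -> ~~ e x a -> b \in B i -> e x b ->
  z \in B im1 -> e a z -> e b z.
Proof.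
move=> ha xa hb xb hz az; apply/negPn/negP => bz.
have [c hc xc] := A3_nbr_next.
have ab : e a b by apply: (blowup_adj ha hb); apply: contraTneq xb => <-.
have bc := A3_complete_next hb xb hc xc.
have ac := A3_anti ha xa hc xc.
by apply: (no_induced_C6 e_sym e_irr z a b c (q ip2) (q im2) noC6); adj.
Qed.

Lemma A3_nbhd_mono_i_next a b z : a \in B i -> ~~ e x a -> b \in B i -> e x b ->
  z \in B ip1 -> e a z -> e b z.
Proof.
move=> ha xa hb xb hz az; apply/negPn/negP => bz.
have [c hc xc] := A3_nbr_next.
have ab : e a b by apply: (blowup_adj ha hb); apply: contraTneq xb => <-.
have bc := A3_complete_next hb xb hc xc.
have ac := A3_anti ha xa hc xc.
have xz : ~~ e x z := contraL (A3_anti ha xa hz) az.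
have zc : e z c by apply: (blowup_adj hz hc); apply: contraNneq xz => ->.
by apply: (no_induced_C4 e_sym e_irr a z c b noC4); adj.
Qed.

Lemma A3_nbhd_proper_i a b : a \in B i :\: nbhd e x -> b \in nbhd_in e (B i) x ->
  nbhd_in e (B im1 :|: B ip1) a \proper nbhd_in e (B im1 :|: B ip1) b.
Proof.
rewrite !inE => /andP [xa ha] /andP [hb xb].
have [c hc xc] := A3_nbr_next.
apply/properP; split.
  apply/subsetP => z; rewrite !inE => /andP [hz az]; rewrite hz.
  by case/orP: hz => hz;
    [apply: (A3_nbhd_mono_i_prev ha) | apply: (A3_nbhd_mono_i_next ha)].
exists c; rewrite !inE hc orbT /=; first exact: (A3_complete_next hb).
exact: (A3_anti ha).
Qed.

Lemma A3_nbhd_mono_prev_im2 a b z : a \in B im1 -> ~~ e x a -> b \in B im1 -> e x b ->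
  z \in B im2 -> e a z -> e b z.
Proof.
move=> ha xa hb xb hz az; apply/negPn/negP => bz.
have [c hc xc] := A3_nbr_next.
have ab : e a b by apply: (blowup_adj ha hb); apply: contraTneq xb => <-.
by apply: (no_induced_C6 e_sym e_irr z a b x c (q ip2) noC6); adj.
Qed.

Lemma A3_nbhd_mono_prev_i a b z : a \in B im1 -> ~~ e x a -> b \in B im1 -> e x b ->
  z \in B i -> e a z -> e b z.
Proof.
move=> ha xa hb xb hz az.
have [xz | xz] := boolP (e x z); first by rewrite e_sym (A3_complete_prev hz).
apply/negPn/negP => bz.
have [c hc xc] := A3_nbr_next.
have ab : e a b by apply: (blowup_adj ha hb); apply: contraTneq xb => <-.
have [z1 hz1 zz1] := blowup_nbr_next hz.
have xz1 : ~~ e x z1 := contraL (A3_anti hz xz hz1) zz1.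
have zc := A3_anti hz xz hc xc.
have cz1 : e c z1 by apply: (blowup_adj hc hz1); apply: contraNneq xz1 => <-.
by apply: (no_induced_C6 e_sym e_irr z1 z a b x c noC6); adj.
Qed.

Lemma A3_nbhd_subset_prev a b : a \in B im1 :\: nbhd e x -> b \in nbhd_in e (B im1) x ->
  nbhd_in e (B im2 :|: B i) a \subset nbhd_in e (B im2 :|: B i) b.
Proof.
rewrite !inE => /andP [xa ha] /andP [hb xb].
apply/subsetP => z; rewrite !inE => /andP [hz az]; rewrite hz.
by case/orP: hz => hz;
  [apply: (A3_nbhd_mono_prev_im2 ha) | apply: (A3_nbhd_mono_prev_i ha)].
Qed.

Lemma A3_prev_nbr_complete :
  exists2 b, b \in nbhd_in e (B im1) x & complete e [set b] (B im2 :|: B i).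
Proof.
have qC_im1 : complete e [set q im1] (B im2 :|: B i).
  by have := @qC im1; rewrite isucc_pred.
have [xq | xq] := boolP (e x (q im1)).
  by exists (q im1); rewrite // !inE qB.
have [y hy xy] := A3_nbr_prev.
exists y; first by rewrite !inE hy.
move=> _ v /set1P -> hv.
have /subsetP sub : nbhd_in e (B im2 :|: B i) (q im1) \subset nbhd_in e (B im2 :|: B i) y.
  by apply: A3_nbhd_subset_prev; rewrite !inE ?qB ?xq ?hy.
have : v \in nbhd_in e (B im2 :|: B i) (q im1).
  by rewrite inE hv inE (qC_im1 _ _ (set11 _) hv).
by move/sub; rewrite !inE => /andP [].
Qed.

End A3Vertex.

End NiceBlowup.

Theorem lemma8p1 (T : finType) (e : rel T)
  (e_sym : symmetric e) (e_irr : irreflexive e)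
  (noP7 : ~ has_induced e (path_rel 7))
  (noC4 : ~ has_induced e (cycle_rel 4))
  (noC6 : ~ has_induced e (cycle_rel 6))
  (noC7 : ~ has_induced e (cycle_rel 7))
  (B : 'I_5 -> {set T}) (Hmax : maximal_nice_blowup e B)
  (q : 'I_5 -> T)
  (qB : forall j, q j \in B j)
  (qC : forall j, complete e [set q j] (B (ipred j) :|: B (isucc j)))
  (i : 'I_5) (x : T) (xA : x \in A3 e B i)
  (Hanti : anticomplete e (B i :\: nbhd e x) (nbhd_in e (B (isucc i)) x)) :
  [/\ q i \in nbhd_in e (B i) x /\ q (isucc i) \in B (isucc i) :\: nbhd e x,
      complete e (nbhd_in e (B i) x) (nbhd_in e (B (ipred i)) x) /\
      complete e (nbhd_in e (B i) x) (nbhd_in e (B (isucc i)) x),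
      (forall a b, a \in B i :\: nbhd e x -> b \in nbhd_in e (B i) x ->
         nbhd_in e (B (ipred i) :|: B (isucc i)) a \proper
         nbhd_in e (B (ipred i) :|: B (isucc i)) b) &
      (forall a b, a \in B (ipred i) :\: nbhd e x -> b \in nbhd_in e (B (ipred i)) x ->
         nbhd_in e (B (ipred (ipred i)) :|: B i) a \subset
         nbhd_in e (B (ipred (ipred i)) :|: B i) b) /\
      (exists2 b, b \in nbhd_in e (B (ipred i)) x &
         complete e [set b] (B (ipred (ipred i)) :|: B i))].
Proof.
case: Hmax => B_nice B_max.
split; first exact: (A3_q_nbhd e_sym B_nice qB).
- exact: (A3_nbhd_complete e_sym B_nice qB).
- exact: (A3_nbhd_proper_i e_sym B_nice qB).
- split; first exact: (A3_nbhd_subset_prev e_sym B_nice qB).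
  exact: (A3_prev_nbr_complete e_sym B_nice qB).
Qed.
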